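(* Let $u$ be a positive harmonic function on $\mathbf D$ belonging to $\mathcal K$, and let $\mu$ be the finite positive Borel measure on $\mathbf T$ with $u(re^{i\theta})=\int P(re^{i(\theta-\phi)})\,d\mu(e^{i\phi})$, where $P(re^{i\theta})=\frac1{2\pi}\frac{1-r^2}{1-2r\cos\theta+r^2}$. Let $C$ be a constant such that $\mu(I)\le C|I|\log\frac e{|I|}$ for every arc $I\subset\mathbf T$. For $n\ge1$ let $F_n=\{\theta\in[0,2\pi):\ \limsup_{r\to1}\frac{u(re^{i\theta})}{|\log(1-r)|}\ge\frac2n\}$. Then there exists $k>0$ depending only on $C$ and $n$ such that for each $\theta\in F_n$ there exists a decreasing sequence $(\Delta_j)$ with $\Delta_j\to0$ satisfying $$\mu(\theta-\Delta_j,\theta+\Delta_j)\ge k\left(10\Delta_j\log\frac1{10\Delta_j}\right)\quad\text{for all }j.$$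
   Context: $\mathbf D$ is the open unit disc and $\mathbf T$ the unit circle; $|I|$ is arc length. $\mathcal K$ is the class of harmonic functions $u$ on $\mathbf D$ for which there is a constant $C'$ with $u(z)\le C'\log\frac{e}{1-|z|}$ on $\mathbf D$ (for positive $u\in\mathcal K$ the representing measure satisfies $\mu(I)\le C|I|\log\frac e{|I|}$ for some $C$). Notation: $\mu(\alpha,\beta)=\mu(\{e^{i\varphi}:\alpha\le\varphi<\beta\})$. *)

From HB Require Import structures.
From mathcomp Require Import all_boot all_order all_algebra.
From mathcomp Require Import all_classical all_reals all_analysis.
Set Implicit Arguments. Unset Strict Implicit. Unset Printing Implicit Defensive.
Import Order.TTheory GRing.Theory Num.Theory.
Import numFieldNormedType.Exports.
Local Open Scope classical_set_scope.
Local Open Scope ring_scope.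

(* The circle T is parametrized by the angle phi in [0, 2pi); a finite positive
   Borel measure on T is a Borel measure mu on R carried by [0, 2pi). *)
Definition circle_measure {R : realType}
  (mu : {measure set (measurableTypeR R) -> \bar R}) : Prop :=
  mu (~` `[0%R, (2 * pi)%R[%classic) = 0%E /\ (mu `[0%R, (2 * pi)%R[%classic < +oo)%E.

(* mu(a, b) = mu({e^{i phi} : a <= phi < b}) (angles taken mod 2pi). *)
Definition marc {R : realType} (mu : {measure set (measurableTypeR R) -> \bar R})
  (a b : R) : \bar R :=
  mu [set phi | phi \in `[0%R, (2 * pi)%R[%classic /\
                exists m : int, a <= phi + 2 * pi * m%:~R < b].

Definition poisson {R : realType} (r t : R) : R :=
  (1 - r ^+ 2) / (2 * pi * (1 - 2 * r * cos t + r ^+ 2)).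

Definition poisson_int {R : realType} (mu : {measure set (measurableTypeR R) -> \bar R})
  (r theta : R) : R :=
  fine (\int[mu]_(phi in `[0%R, (2 * pi)%R[%classic) (poisson r (theta - phi))%:E)%E.

Definition in_K {R : realType} (u : R -> R -> R) : Prop :=
  exists C' : R, forall r theta, 0 <= r < 1 ->
    u r theta <= C' * ln (expR 1 / (1 - r)).

Definition Fset {R : realType} (u : R -> R -> R) (n : nat) : set R :=
  [set theta | theta \in `[0%R, (2 * pi)%R[%classic /\
     ((2 / n%:R)%:E <= limf_esup (fun r => (u r theta / `|ln (1 - r)|)%:E)
                                  (at_left 1))%E].

From HB Require Import structures.
From mathcomp Require Import all_boot all_order all_algebra.
From mathcomp Require Import all_classical all_reals all_analysis.
From mathcomp Require Import measurable_realfun ring lra zify.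
Import Order.TTheory GRing.Theory Num.Theory.
Import numFieldNormedType.Exports.
Local Open Scope classical_set_scope.
Local Open Scope ring_scope.
Set Implicit Arguments. Unset Strict Implicit. Unset Printing Implicit Defensive.

(* Up to a constant K, the Poisson kernel is dominated by the Lorentzian
   (1 - r) / ((1 - r)^2 + t^2).  Covering the circle by the arcs of radius
   2^j (1 - r) around theta therefore bounds u(r e^{i theta}) by
   sum_j 4 K mu(arc_j) / (4^j (1 - r)).  If mu(theta - D, theta + D) <=
   k 10 D log(1 / (10 D)) for all small D, the j-th term is at most
   (40 K k log(1 / (1 - r)) + O(1)) / 2^j, so u(r e^{i theta}) <=
   80 K k log(1 / (1 - r)) + O(1).  For k = 1 / (80 K n) the limsup defining
   F_n would then be at most 1/n + 1/(2n) < 2/n; so around every theta in F_n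
   there are arbitrarily short arcs violating the bound, and a decreasing
   sequence of their radii does the job. *)

Section real_facts.
Variable R : realType.

Lemma exists_pow2_ge (x : R) : exists N, x <= 2 ^+ N.
Proof.
have [x_le0|x_gt0] := lerP x 0; first by exists 0%N; rewrite expr0; lra.
have := archi_boundP (ltW x_gt0); set n := Num.Def.archi_bound x => x_lt.
by exists n; rewrite (le_trans (ltW x_lt)) // -natrX ler_nat ltnW // ltn_expl.
Qed.

Lemma sum_div_pow2_le (b : R) n : 0 <= b -> \sum_(j < n) b / 2 ^+ j <= 2 * b.
Proof.
move=> b_ge0; have := @geometric_le_lim R n b 2^-1 b_ge0.
rewrite invr_gt0 ger0_norm ?invr_ge0 // invf_lt1 // ltr1n => /(_ (ltr0Sn R 1) isT).
rewrite seriesEord /= (_ : b / (1 - 2^-1) = 2 * b); last by field.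
by under eq_bigr do rewrite exprVn.
Qed.

Lemma fine_le_EFin (x : \bar R) (y : R) : (0 <= x)%E -> (x <= y%:E)%E -> fine x <= y.
Proof. by case: x => //= x _; rewrite lee_fin. Qed.

End real_facts.

Section poisson_kernel.
Variable R : realType.
Implicit Types r t x : R.

Lemma sin_ge_linear : exists2 c : R, 0 < c &
  forall x, 0 <= x <= pi / 2 -> c * x <= sin x.
Proof.
have cos1_gt0 : (0 : R) < cos 1 := @cos1_gt0 R.
have sin1_gt0 : (0 : R) < sin 1 by apply: sin2_gt0; lra.
have pihalf_ge1 := @pihalf_ge1 R; have pihalf_lt2 := @pihalf_lt2 R.
exists (Num.min (cos 1) (sin 1 / 2)); first by rewrite lt_min cos1_gt0 /=; lra.
move=> x /andP[x_ge0 x_le].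
have [x_le1|x_gt1] := lerP x 1.
  have [->|x_neq0] := eqVneq x 0; first by rewrite mulr0 sin0.
  have x_gt0 : 0 < x by rewrite lt_neqAle eq_sym x_neq0.
  have [c cI] := @MVT R sin cos 0 x x_gt0 (fun y _ => is_derive_sin y)
     (continuous_subspaceT (fun y => @continuous_sin R y)).
  rewrite sin0 !subr0 => ->; rewrite ler_pM2r // ge_min; apply/orP; left.
  move: cI; rewrite in_itv /= => /andP[c_gt0 c_lt].
  by rewrite ltW // ltr_cos ?in_itv /=; try (apply/andP; split); lra.
have : sin 1 < sin x by rewrite ltr_sin // in_itv /=; apply/andP; split; lra.
have : Num.min (cos 1) (sin 1 / 2) * x <= sin 1 / 2 * x.
  by rewrite ler_pM2r ?ge_min ?lexx ?orbT //; lra.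
nra.
Qed.

Lemma poisson_ge0 r t : 0 <= r < 1 -> 0 <= poisson r t.
Proof.
move=> /andP[r_ge0 r_lt1]; have := cos_le1 t; have := @pi_gt0 R => pi_gt0 cos_le.
by rewrite /poisson divr_ge0 ?mulr_ge0 //; nra.
Qed.

Lemma poisson_denom_ge : exists2 c : R, 0 < c &
  forall r t, 1 / 2 <= r -> `|t| <= pi ->
  c * ((1 - r) ^+ 2 + t ^+ 2) <= 1 - 2 * r * cos t + r ^+ 2.
Proof.
have [c0 c0_gt0 sin_ge] := sin_ge_linear.
have c0_le1 : c0 <= 1.
  have := sin_ge 1; rewrite mulr1 => /(_ _)/le_trans; apply; last exact: sin_le1.
  by have := @pihalf_ge1 R; lra.
exists (c0 ^+ 2 / 2); first by rewrite divr_gt0 ?exprn_gt0.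
move=> r t r_ge t_le.
set s := sin (t / 2).
have cos_t : cos t = 1 - 2 * s ^+ 2.
  rewrite /s -{1}[t](_ : (t / 2) *+ 2 = t); last by rewrite -mulr_natr; field.
  by rewrite cos_mulr2n cos2sin2; ring.
have s2_ge : c0 ^+ 2 * t ^+ 2 / 4 <= s ^+ 2.
  have -> : s ^+ 2 = sin (`|t| / 2) ^+ 2.
    rewrite /s; have [t_ge0|t_lt0] := lerP 0 t; first by rewrite ger0_norm.
    by rewrite ltr0_norm // mulNr sinN sqrrN.
  have t_ge0 := normr_ge0 t.
  have sin_t := sin_ge (`|t| / 2) (ltac:(apply/andP; split; lra)).
  rewrite -(real_normK (num_real t)).
  have -> : c0 ^+ 2 * `|t| ^+ 2 / 4 = (c0 * (`|t| / 2)) ^+ 2 by field.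
  by rewrite ler_sqr ?nnegrE //; nra.
have := sqr_ge0 (1 - r); have := sqr_ge0 s.
have : c0 ^+ 2 <= 1 by nra.
rewrite cos_t; nra.
Qed.

Lemma poisson_le_lorentzian : exists2 K : R, 0 < K &
  forall r t, 1 / 2 <= r < 1 -> `|t| <= pi ->
  poisson r t <= K * (1 - r) / ((1 - r) ^+ 2 + t ^+ 2).
Proof.
have [c c_gt0 denom_ge] := poisson_denom_ge.
have pi_gt0 := @pi_gt0 R.
exists (1 / (pi * c)); first by rewrite divr_gt0 ?mulr_gt0.
move=> r t /andP[r_ge r_lt1] t_le; have := denom_ge r t r_ge t_le.
set X := (1 - r) ^+ 2 + t ^+ 2 => cX_le.
have X_gt0 : 0 < X by rewrite ltr_pwDl ?sqr_ge0 ?exprn_gt0 // subr_gt0.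
have -> : 1 / (pi * c) * (1 - r) / X = (2 * (1 - r)) / (2 * pi * (c * X)).
  move: (pi) pi_gt0 => p p_gt0.
  by field; rewrite ?(gt_eqF p_gt0) ?(gt_eqF c_gt0) ?(gt_eqF X_gt0).
have cX_gt0 : 0 < c * X by rewrite mulr_gt0.
rewrite /poisson ler_pM //.
- by rewrite subr_ge0 expr_le1 //; lra.
- by rewrite invr_ge0 mulr_ge0 //; nra.
- by rewrite -[r ^+ 2]/(r * r); nra.
- by rewrite lef_pV2 ?posrE ?ler_pM2l ?mulr_gt0 //; nra.
Qed.

Lemma continuous_poisson r th : 0 <= r < 1 -> continuous (fun phi => poisson r (th - phi)).
Proof.
move=> /andP[r_ge0 r_lt1] x; have pi_gt0 := @pi_gt0 R; have := cos_le1 (th - x) => cos_le.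
apply: (@continuousM _ _ (fun=> 1 - r ^+ 2)
  (fun phi => (2 * pi * (1 - 2 * r * cos (th - phi) + r ^+ 2))^-1)).
  exact: cst_continuous.
apply: continuousV; first by rewrite gt_eqF // mulr_gt0 //; nra.
apply: (@continuousM _ _ (fun=> 2 * pi) (fun phi => 1 - 2 * r * cos (th - phi) + r ^+ 2)).
  exact: cst_continuous.
apply: (@continuousD _ _ _ (fun phi => 1 - 2 * r * cos (th - phi)) (fun=> r ^+ 2));
  last exact: cst_continuous.
apply: (@continuousD _ _ _ (fun=> (1 : R)) (fun phi => - (2 * r * cos (th - phi)))).
  exact: cst_continuous.
apply: (@continuousN _ _ _ (fun phi => 2 * r * cos (th - phi))).
apply: (@continuousM _ _ (fun=> 2 * r) (fun phi => cos (th - phi))).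
  exact: cst_continuous.
apply: (@continuous_comp _ _ _ (fun phi => th - phi) cos); last exact: continuous_cos.
apply: (@continuousD _ _ _ (fun=> th) (fun phi => - phi)); first exact: cst_continuous.
exact: (@continuousN _ _ _ id).
Qed.

End poisson_kernel.

Section arcs.
Variable R : realType.
Implicit Types th phi D : R.

(* The angles in [0, 2pi) of the arc [th - D, th + D) mod 2pi; for th in
   [0, 2pi) and D <= pi only the translates by 0 and +-2pi can contribute. *)
Definition arc_set th D : set R :=
  `[0, 2 * pi[%classic `&` (`[th - D, th + D[%classic `|`
     `[th - D - 2 * pi, th + D - 2 * pi[%classic `|`
     `[th - D + 2 * pi, th + D + 2 * pi[%classic).

Lemma measurable_arc_set th D : measurable (arc_set th D).
Proof.
by apply: measurableI; [|apply: measurableU; [apply: measurableU|]];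
  exact: measurable_itv.
Qed.

Lemma intr_lt2_cases (m : int) : -2 < (m%:~R : R) < 2 -> [\/ m = 0, m = 1 | m = -1].
Proof.
move=> /andP[m_gt m_lt].
have m_gtN2 : -2 < m by rewrite -(ltr_int R) (_ : (-2)%:~R = -2 :> R) // intrN.
have m_lt2 : m < 2 by rewrite -(ltr_int R).
have : m = 0 \/ m = 1 \/ m = -1 by lia.
by case=> [|[|]]; [constructor 1 | constructor 2 | constructor 3].
Qed.

Lemma marc_arc_set (mu : {measure set (measurableTypeR R) -> \bar R}) th D :
  0 <= th < 2 * pi -> 0 < D <= pi -> marc mu (th - D) (th + D) = mu (arc_set th D).
Proof.
move=> /andP[th_ge0 th_lt] /andP[D_gt0 D_le]; have pi_gt0 := @pi_gt0 R.
rewrite /marc /arc_set; congr (mu _); apply/seteqP; split => phi /=.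
  rewrite in_setE /= in_itv /= => -[/andP[phi_ge0 phi_lt] [m /andP[m_ge m_lt]]].
  split; first by rewrite phi_ge0 phi_lt.
  have [m0|m1|mN1] := @intr_lt2_cases m (ltac:(apply/andP; split; nra)).
  - move: m_ge m_lt; rewrite m0 mulr0 addr0 => ? ?.
    by left; left; rewrite in_itv /=; apply/andP; split; lra.
  - move: m_ge m_lt; rewrite m1 mulr1 => ? ?.
    by left; right; rewrite in_itv /=; apply/andP; split; lra.
  - move: m_ge m_lt; rewrite mN1 mulrN1 => ? ?.
    by right; rewrite in_itv /=; apply/andP; split; lra.
rewrite !in_itv /= => -[/andP[phi_ge0 phi_lt] phiI].
split; first by rewrite in_setE /= in_itv /= phi_ge0 phi_lt.
case: phiI => [[]|] /andP[phi_ge phi_le].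
- by exists 0; rewrite mulr0 addr0 phi_ge phi_le.
- by exists 1; rewrite mulr1; apply/andP; split; lra.
- by exists (-1); rewrite mulrN1; apply/andP; split; lra.
Qed.

Lemma angle_representative th phi : 0 <= th < 2 * pi -> 0 <= phi < 2 * pi ->
  exists t, [/\ `|t| <= pi, cos (th - phi) = cos t &
    forall D, `|t| < D -> arc_set th D phi].
Proof.
move=> /andP[th_ge0 th_lt] /andP[phi_ge0 phi_lt]; have pi_gt0 := @pi_gt0 R.
have cos_2pi x : cos (x + 2 * pi) = cos x by rewrite mulr_natl cosD2pi.
have phiI : `[0, 2 * pi[%classic phi by rewrite /= in_itv /= phi_ge0 phi_lt.
have [gt_pi|le_pi] := ltrP pi (th - phi).
  exists (th - phi - 2 * pi); split; first by rewrite ler_norml; apply/andP; split; lra.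
    by rewrite -[in RHS]cos_2pi subrK.
  move=> D; rewrite ltr_norml => /andP[? ?]; split => //.
  by left; right; rewrite /= in_itv /=; apply/andP; split; lra.
have [lt_Npi|ge_Npi] := ltrP (th - phi) (- pi).
  exists (th - phi + 2 * pi); split; first by rewrite ler_norml; apply/andP; split; lra.
    by rewrite cos_2pi.
  move=> D; rewrite ltr_norml => /andP[? ?]; split => //.
  by right; rewrite /= in_itv /=; apply/andP; split; lra.
exists (th - phi); split => //; first by rewrite ler_norml; apply/andP; split; lra.
move=> D; rewrite ltr_norml => /andP[? ?]; split => //.
by left; left; rewrite /= in_itv /=; apply/andP; split; lra.
Qed.

End arcs.

Section dyadic_decomposition.
Variables (R : realType) (K : R).
Hypothesis K_gt0 : 0 < K.
Hypothesis poisson_le : forall r t, 1 / 2 <= r < 1 -> `|t| <= pi ->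
  poisson r t <= K * (1 - r) / ((1 - r) ^+ 2 + t ^+ 2).

(* If J is least with |t| < 2^J (1 - r), the J-th term alone dominates, since
   |t| >= 2^(J-1) (1 - r) when J > 0. *)
Lemma poisson_le_dyadic_sum (r th phi : R) (N : nat) :
  1 / 2 <= r < 1 -> 4 <= 2 ^+ N * (1 - r) ->
  0 <= th < 2 * pi -> 0 <= phi < 2 * pi ->
  poisson r (th - phi) <= \sum_(j < N.+1)
     4 * K / ((2 ^+ j) ^+ 2 * (1 - r)) * \1_(arc_set th (2 ^+ j * (1 - r))) phi.
Proof.
move=> /andP[r_ge r_lt1] N_ge thI phiI.
have [t [t_le cos_eq t_arc]] := angle_representative thI phiI.
have -> : poisson r (th - phi) = poisson r t by rewrite /poisson cos_eq.
have h_gt0 : 0 < 1 - r by lra.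
have pi_lt4 : pi < 4 :> R by have := @pihalf_lt2 R; lra.
have t_lt : exists j, `|t| < 2 ^+ j * (1 - r) by exists N; lra.
case: (ex_minnP t_lt) => J t_ltJ J_min.
have J_le : (J < N.+1)%N by rewrite ltnS J_min //; lra.
have weight_ge0 (j : nat) : 0 <= 4 * K / ((2 ^+ j) ^+ 2 * (1 - r)).
  by rewrite divr_ge0 ?mulr_ge0 ?sqr_ge0 // ltW.
rewrite (bigD1 (Ordinal J_le)) //= indicE mem_set ?mulr1; last exact: t_arc.
apply: (le_trans (poisson_le _ _)); [by apply/andP; split; lra | exact: t_le |].
apply: (le_trans (y := 4 * K / ((2 ^+ J) ^+ 2 * (1 - r)))); last first.
  by rewrite lerDl sumr_ge0 // => j _; rewrite mulr_ge0.
have t2_ge0 := sqr_ge0 t.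
case: J t_ltJ J_min J_le => [|j] t_ltJ J_min J_le.
  rewrite expr0 expr1n mul1r ler_pdivrMr; last nra.
  rewrite mulrAC ler_pdivlMr //.
  have K_ge0 := ltW K_gt0; have h_ge0 := ltW h_gt0.
  have := mulr_ge0 (mulr_ge0 K_ge0 h_ge0) t2_ge0.
  have := mulr_ge0 K_ge0 (sqr_ge0 (1 - r)).
  nra.
have t_ge : 2 ^+ j * (1 - r) <= `|t| by rewrite leNgt; apply/negP => /J_min; rewrite ltnn.
have pow_gt0 : 0 < (2 : R) ^+ j by exact: exprn_gt0.
have -> : 4 * K / ((2 ^+ j.+1) ^+ 2 * (1 - r)) = K * (1 - r) / ((2 ^+ j * (1 - r)) ^+ 2).
  by rewrite [2 ^+ j.+1]exprS; field; rewrite ?(gt_eqF pow_gt0) ?(gt_eqF h_gt0).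
have : (2 ^+ j * (1 - r)) ^+ 2 <= t ^+ 2.
  by rewrite -(real_normK (num_real t)) ler_sqr // nnegrE; nra.
have := exprn_gt0 2 h_gt0; have := sqr_ge0 (1 - r) => ? ? t2_ge.
rewrite ler_pM2l ?mulr_gt0 // lef_pV2 ?posrE ?exprn_gt0 ?mulr_gt0 //; lra.
Qed.

Lemma integral_poisson_le_dyadic_sum (mu : {measure set (measurableTypeR R) -> \bar R})
    (r th : R) (N : nat) :
  1 / 2 <= r < 1 -> 4 <= 2 ^+ N * (1 - r) -> 0 <= th < 2 * pi ->
  (\int[mu]_(x in `[0%R, (2 * pi)%R[%classic) (poisson r (th - x))%:E <=
   \sum_(j < N.+1) (4 * K / ((2 ^+ j) ^+ 2 * (1 - r)))%:E
                   * mu (arc_set th (2 ^+ j * (1 - r))))%E.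
Proof.
move=> /andP[r_ge r_lt1] N_ge thI; have r01 : 0 <= r < 1 by apply/andP; split; lra.
set D := `[0, 2 * pi[%classic.
pose w j : R := 4 * K / ((2 ^+ j) ^+ 2 * (1 - r)).
pose A j : set R := arc_set th (2 ^+ j * (1 - r)).
have w_ge0 j : 0 <= w j by rewrite divr_ge0 ?mulr_ge0 ?sqr_ge0 ?(ltW K_gt0) // subr_ge0 ltW.
have mD : measurable D by exact: measurable_itv.
have mA j : measurable (A j) by exact: measurable_arc_set.
have -> : (\sum_(j < N.+1) (w j)%:E * mu (A j) =
           \int[mu]_(x in D) \sum_(j < N.+1) (w j * \1_(A j) x)%:E)%E.
  rewrite ge0_integral_sum //; first last.
  - by move=> j x _; rewrite lee_fin mulr_ge0.
  - move=> j; apply/measurable_EFinP/measurable_funM; first exact: measurable_cst.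
    exact: measurable_indic (mA j).
  apply: eq_bigr => j _; under eq_integral do rewrite EFinM.
  by rewrite ge0_integralZl_EFin ?integral_indic ?setIidl //;
    [move=> x [] | exact: mA | apply/measurable_EFinP; exact: measurable_indic (mA j)].
apply: ge0_le_integral => //.
- by move=> x _; rewrite lee_fin poisson_ge0.
- apply/measurable_EFinP; apply: measurable_funTS.
  exact (continuous_measurable_fun (continuous_poisson (th := th) r01)).
- apply: emeasurable_sum => j; apply/measurable_EFinP/measurable_funM.
    exact: measurable_cst.
  exact: measurable_indic (mA j).
- move=> x; rewrite /D /= in_itv /= => xI.
  by rewrite sumEFin lee_fin; apply: poisson_le_dyadic_sum => //; apply/andP.
Qed.

End dyadic_decomposition.

Section log_growth.
Variables (R : realType) (K : R) (mu : {measure set (measurableTypeR R) -> \bar R}).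
Variables (th delta k : R).
Hypothesis K_gt0 : 0 < K.
Hypothesis poisson_le : forall r t, 1 / 2 <= r < 1 -> `|t| <= pi ->
  poisson r t <= K * (1 - r) / ((1 - r) ^+ 2 + t ^+ 2).
Hypothesis th_circle : 0 <= th < 2 * pi.
Hypothesis mu_circle_fin : (mu `[0%R, (2 * pi)%R[%classic < +oo)%E.
Hypotheses (delta_gt0 : 0 < delta) (delta_le1 : delta <= 1) (k_ge0 : 0 <= k).
Hypothesis small_arcs : forall D, 0 < D < delta ->
  (marc mu (th - D) (th + D) <= (k * (10 * D * ln (1 / (10 * D))))%:E)%E.

Let M := fine (mu `[0%R, (2 * pi)%R[%classic).

Let mu_circleE : mu `[0%R, (2 * pi)%R[%classic = M%:E.
Proof. by rewrite fineK // ge0_fin_numE. Qed.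

Let M_ge0 : 0 <= M.
Proof. exact: fine_ge0. Qed.

(* Arcs shorter than delta are controlled by the hypothesis, longer ones by
   the total mass M. *)
Lemma dyadic_term_le (p h : R) : 1 <= p -> 0 < h <= 1 / 2 ->
  ((4 * K / (p ^+ 2 * h))%:E * mu (arc_set th (p * h))
    <= ((40 * K * k * ln (1 / h) + 4 * K * M / delta) / p)%:E)%E.
Proof.
move=> p_ge1 /andP[h_gt0 h_le]; have pi_ge2 := @pi_ge2 R.
have p_gt0 : 0 < p by lra.
have ph_gt0 : 0 < p * h by rewrite mulr_gt0.
have K_ge0 := ltW K_gt0.
have w_ge0 : 0 <= 4 * K / (p ^+ 2 * h) by rewrite divr_ge0 ?mulr_ge0 ?sqr_ge0 ?ltW.
have L_ge0 : 0 <= ln (1 / h) by rewrite ln_ge0 // ler_pdivlMr //; lra.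
have b1_ge0 : 0 <= 40 * K * k * ln (1 / h) by rewrite !mulr_ge0.
have b2_ge0 : 0 <= 4 * K * M / delta.
  by rewrite divr_ge0 ?(ltW delta_gt0) // !mulr_ge0 // M_ge0.
rewrite [(_ + _) / p]mulrDl.
have [ph_lt|ph_ge] := ltrP (p * h) delta.
  have ph_le_pi : p * h <= pi by rewrite (le_trans (ltW ph_lt)) // (le_trans delta_le1) //; lra.
  rewrite -marc_arc_set ?ph_gt0 //.
  have /small_arcs/(lee_wpmul2l (x := (4 * K / (p ^+ 2 * h))%:E)) : 0 < p * h < delta.
    by rewrite ph_gt0 ph_lt.
  rewrite lee_fin => /(_ w_ge0)/le_trans; apply.
  rewrite -EFinM lee_fin.
  have -> : 4 * K / (p ^+ 2 * h) * (k * (10 * (p * h) * ln (1 / (10 * (p * h)))))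
      = 40 * K * k * ln (1 / (10 * (p * h))) / p.
    by field; rewrite !gt_eqF.
  have : ln (1 / (10 * (p * h))) <= ln (1 / h).
    by rewrite ler_ln ?posrE ?divr_gt0 ?mulr_gt0 // !div1r lef_pV2 ?posrE ?mulr_gt0 //; nra.
  have c_ge0 : 0 <= 40 * K * k by rewrite !mulr_ge0.
  have pV_ge0 : 0 <= p^-1 by rewrite invr_ge0 ltW.
  move/(ler_wpM2l c_ge0)/(ler_wpM2r pV_ge0).
  by have := divr_ge0 b2_ge0 (ltW p_gt0); lra.
have : (mu (arc_set th (p * h)) <= M%:E)%E.
  rewrite -mu_circleE; apply: le_measure; rewrite ?inE.
  - exact: measurable_arc_set.
  - exact: measurable_itv.
  - by move=> x [].
move/(lee_wpmul2l (x := (4 * K / (p ^+ 2 * h))%:E)).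
rewrite lee_fin => /(_ w_ge0)/le_trans; apply; rewrite -EFinM lee_fin.
have -> : 4 * K / (p ^+ 2 * h) * M = 4 * K * M / (p * h) / p by field; rewrite !gt_eqF.
have : 4 * K * M / (p * h) <= 4 * K * M / delta.
  by rewrite ler_wpM2l ?mulr_ge0 // lef_pV2.
move/(ler_wpM2r (_ : 0 <= p^-1)); rewrite invr_ge0 (ltW p_gt0) => /(_ isT).
by have := divr_ge0 b1_ge0 (ltW p_gt0); lra.
Qed.

Lemma poisson_int_le_log : exists B : R, forall r, 1 / 2 <= r < 1 ->
  poisson_int mu r th <= 80 * K * k * ln (1 / (1 - r)) + B.
Proof.
exists (8 * K * M / delta) => r /andP[r_ge r_lt1].
have h_gt0 : 0 < 1 - r by lra.
have [N N_ge] := exists_pow2_ge (4 / (1 - r)).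
have {}N_ge : 4 <= 2 ^+ N * (1 - r) by rewrite -ler_pdivrMr.
set b := 40 * K * k * ln (1 / (1 - r)) + 4 * K * M / delta.
have b_ge0 : 0 <= b.
  rewrite addr_ge0 ?divr_ge0 ?mulr_ge0 ?(ltW K_gt0) ?(ltW delta_gt0) ?M_ge0 //.
  by rewrite ln_ge0 // ler_pdivlMr // mul1r; lra.
have int_le : (\int[mu]_(x in `[0%R, (2 * pi)%R[%classic) (poisson r (th - x))%:E
               <= (2 * b)%:E)%E.
  have r_range : 1 / 2 <= r < 1 by rewrite r_ge.
  have h_range : 0 < 1 - r <= 1 / 2 by rewrite h_gt0; lra.
  apply: (le_trans (integral_poisson_le_dyadic_sum K_gt0 poisson_le mu r_range N_ge th_circle)).
  apply: (le_trans (lee_sum _ (fun (j : 'I_N.+1) _ => dyadic_term_le (exprn_ege1 j (ler1n R 2)) h_range))).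
  by rewrite sumEFin lee_fin sum_div_pow2_le.
rewrite /poisson_int (le_trans (fine_le_EFin _ int_le)) //.
- by apply: integral_ge0 => x _; rewrite lee_fin poisson_ge0 //; apply/andP; split; lra.
- by rewrite /b; lra.
Qed.

End log_growth.

Section limsup_at_one.
Variable R : realType.

Lemma limf_esup_at_left_le (f : R -> \bar R) (c z : R) : z < 1 ->
  (forall r, z < r < 1 -> (f r <= c%:E)%E) -> (limf_esup f (at_left 1) <= c%:E)%E.
Proof.
move=> z_lt1 f_le; rewrite limf_esupE; apply: ge_ereal_inf.
have near1 : (at_left (1 : R)) [set r | z < r < 1].
  near=> r; apply/andP; split; near: r; [exact: nbhs_left_gt | exact: nbhs_left_lt].
exists (ereal_sup (f @` [set r | z < r < 1])); first by exists [set r | z < r < 1].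
by apply: ge_ereal_sup => _ [r rI <-]; exact: f_le.
Unshelve. all: by end_near.
Qed.

Lemma limsup_log_ratio_le (u : R -> R) (c B e : R) : 0 < e ->
  (forall r, 1 / 2 <= r < 1 -> u r <= c * ln (1 / (1 - r)) + B) ->
  (limf_esup (fun r => (u r / `|ln (1 - r)|)%:E) (at_left 1) <= (c + e)%:E)%E.
Proof.
move=> e_gt0 u_le; pose L := `|B| / e + 1.
have L_gt0 : 0 < L by rewrite /L ltr_pwDr ?divr_ge0 // ltW.
have expL_gt0 := expR_gt0 (- L).
apply: (@limf_esup_at_left_le _ _ (Num.max (1 / 2) (1 - expR (- L)))).
  by rewrite gt_max; apply/andP; split; lra.
move=> r /andP[]; rewrite gt_max => /andP[r_gt r_near] r_lt1; rewrite lee_fin.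
have h_gt0 : 0 < 1 - r by lra.
have lnh_lt : ln (1 - r) < - L by rewrite -ltr_expR lnK ?posrE //; lra.
have -> : `|ln (1 - r)| = - ln (1 - r) by rewrite ltr0_norm //; lra.
have := u_le r (ltac:(apply/andP; split; lra)).
rewrite div1r lnV ?posrE // => u_r.
rewrite ler_pdivrMr; last lra.
have : `|B| <= e * L by rewrite /L mulrDr mulrC divfK ?gt_eqF //; lra.
have := ler_norm B; nra.
Qed.

End limsup_at_one.

Lemma decreasing_cvg0_seq (R : realType) (P : R -> Prop) :
  (forall eps, 0 < eps -> exists2 D, 0 < D < eps & P D) ->
  exists Delta : nat -> R,
    [/\ forall j, Delta j.+1 < Delta j, Delta @ \oo --> 0 & forall j, P (Delta j)].
Proof.
move=> small.
have pick eps : exists D, 0 < eps -> 0 < D < eps /\ P D.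
  have [eps_gt0|_] := ltrP 0 eps.
    by have [D ? ?] := small eps eps_gt0; exists D.
  by exists 0.
have [g g_spec] := choice pick.
pose Delta := fix Delta j := if j is j'.+1 then g (Num.min (Delta j') j.+1%:R^-1) else g 1.
have Delta_spec j : 0 < Delta j < j.+1%:R^-1 /\ P (Delta j).
  elim: j => [|j [/andP[D_gt0 _] _]]; first by have := g_spec 1 ltr01; rewrite invr1.
  have min_gt0 : 0 < Num.min (Delta j) j.+2%:R^-1 by rewrite lt_min D_gt0 invr_gt0 ltr0n.
  have [/andP[-> lt_min] ?] := g_spec _ min_gt0; split => //=.
  by rewrite (lt_le_trans lt_min) // ge_min lexx orbT.
exists Delta; split => [j||j]; last by have [] := Delta_spec j.
- have [/andP[D_gt0 _] _] := Delta_spec j.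
  have min_gt0 : 0 < Num.min (Delta j) j.+2%:R^-1 by rewrite lt_min D_gt0 invr_gt0 ltr0n.
  have [/andP[_ lt_min] _] := g_spec _ min_gt0.
  by rewrite (lt_le_trans lt_min) // ge_min lexx.
- apply: (@squeeze_cvgr _ _ _ _ (cst 0) harmonic); last 2 first.
  + exact: cvg_cst.
  + exact: cvg_harmonic.
  by apply: nearW => j; have [/andP[D_gt0 D_lt] _] := Delta_spec j; rewrite !ltW.
Qed.

Section heavy_arcs.
Variables (R : realType) (K : R) (n : nat).
Variables (mu : {measure set (measurableTypeR R) -> \bar R}) (th : R).
Hypothesis K_gt0 : 0 < K.
Hypothesis poisson_le : forall r t, 1 / 2 <= r < 1 -> `|t| <= pi ->
  poisson r t <= K * (1 - r) / ((1 - r) ^+ 2 + t ^+ 2).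
Hypothesis n_gt0 : (0 < n)%N.
Hypothesis mu_circle_fin : (mu `[0%R, (2 * pi)%R[%classic < +oo)%E.
Hypothesis th_F : Fset (poisson_int mu) n th.

Lemma heavy_arcs_arbitrarily_small (eps : R) : 0 < eps ->
  exists2 D, 0 < D < eps & (((1 / (80 * K * n%:R)) * (10 * D * ln (1 / (10 * D))))%:E
                            <= marc mu (th - D) (th + D))%E.
Proof.
move=> eps_gt0; apply: contrapT => no_heavy.
have [th_circle limsup_ge] := th_F; rewrite inE /= in_itv /= in th_circle.
have nR_gt0 : (0 : R) < n%:R by rewrite ltr0n.
set k := 1 / (80 * K * n%:R) in no_heavy.
have k_ge0 : 0 <= k by rewrite divr_ge0 ?mulr_ge0 ?(ltW K_gt0) ?ler0n.
have delta_gt0 : 0 < Num.min eps 1 by rewrite lt_min eps_gt0 ltr01.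
have delta_le1 : Num.min eps 1 <= 1 by rewrite ge_min lexx orbT.
have small_arcs D : 0 < D < Num.min eps 1 ->
    (marc mu (th - D) (th + D) <= (k * (10 * D * ln (1 / (10 * D))))%:E)%E.
  move=> /andP[D_gt0 D_lt]; rewrite leNgt; apply/negP => /ltW heavy.
  by apply: no_heavy; exists D; rewrite // D_gt0 (lt_le_trans D_lt) // ge_min lexx.
have [B u_le] := poisson_int_le_log K_gt0 poisson_le th_circle mu_circle_fin
  delta_gt0 delta_le1 k_ge0 small_arcs.
have slope : 80 * K * k = n%:R^-1 by rewrite /k; field; rewrite !gt_eqF.
rewrite slope in u_le.
have e_gt0 : 0 < (2 * n%:R)^-1 :> R by rewrite invr_gt0 mulr_gt0.
move: (le_trans limsup_ge (limsup_log_ratio_le e_gt0 u_le)); rewrite lee_fin.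
have : 2 / n%:R = n%:R^-1 + (2 * n%:R)^-1 + (2 * n%:R)^-1 :> R.
  by field; rewrite gt_eqF.
lra.
Qed.

End heavy_arcs.

Theorem lemma12 (R : realType) (C : R) (n : nat) : (1 <= n)%N ->
  exists k : R, 0 < k /\
  forall mu : {measure set (measurableTypeR R) -> \bar R},
    circle_measure mu ->
    in_K (poisson_int mu) ->
    (forall a L : R, 0 < L <= 1 ->
       (marc mu a (a + L) <= (C * L * ln (expR 1 / L))%:E)%E) ->
    forall theta, Fset (poisson_int mu) n theta ->
    exists Delta : nat -> R,
      (forall j, Delta j.+1 < Delta j) /\
      Delta @ \oo --> 0 /\
      (forall j, ((k * (10 * Delta j * ln (1 / (10 * Delta j))))%:E
                  <= marc mu (theta - Delta j) (theta + Delta j))%E).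
Proof.
move=> n_gt0; have [K K_gt0 poisson_le] := poisson_le_lorentzian R.
exists (1 / (80 * K * n%:R)); split; first by rewrite divr_gt0 ?mulr_gt0 ?ltr0n.
move=> mu [_ mu_circle_fin] _ _ th th_F.
have [Delta [Delta_decr Delta_cvg Delta_heavy]] := decreasing_cvg0_seq
  (heavy_arcs_arbitrarily_small K_gt0 poisson_le n_gt0 mu_circle_fin th_F).
by exists Delta.
Qed.
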